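(* There is no countable right-ordered group $U$ such that every finitely generated totally ordered abelian group admits an order-embedding into $U$. Consequently there is no countable right-ordered group into which every finitely generated right-ordered group order-embeds.
   Context: A right-ordered group is a group with a total order $\le$ such that $x\le y$ implies $xz\le yz$ for all $x,y,z$. A totally ordered group additionally satisfies $x\le y\Rightarrow zx\le zy$. An order-embedding is an injective group homomorphism that preserves the order. *)

From Stdlib Require Import List.

Record RightOrderedGroup := {
  rog_carrier :> Type;
  rog_mul : rog_carrier -> rog_carrier -> rog_carrier;
  rog_one : rog_carrier;
  rog_inv : rog_carrier -> rog_carrier;
  rog_le : rog_carrier -> rog_carrier -> Prop;
  rog_mulA : forall x y z, rog_mul x (rog_mul y z) = rog_mul (rog_mul x y) z;
  rog_mul1 : forall x, rog_mul rog_one x = x;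
  rog_mulV : forall x, rog_mul (rog_inv x) x = rog_one;
  rog_le_refl : forall x, rog_le x x;
  rog_le_antisym : forall x y, rog_le x y -> rog_le y x -> x = y;
  rog_le_trans : forall x y z, rog_le x y -> rog_le y z -> rog_le x z;
  rog_le_total : forall x y, rog_le x y \/ rog_le y x;
  rog_le_mulr : forall x y z, rog_le x y -> rog_le (rog_mul x z) (rog_mul y z)
}.

Definition totally_ordered (G : RightOrderedGroup) : Prop :=
  forall x y z : G, rog_le G x y -> rog_le G (rog_mul G z x) (rog_mul G z y).

Definition abelian (G : RightOrderedGroup) : Prop :=
  forall x y : G, rog_mul G x y = rog_mul G y x.

Inductive generated (G : RightOrderedGroup) (s : list G) : G -> Prop :=
  | gen_elem : forall x, In x s -> generated G s x
  | gen_one : generated G s (rog_one G)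
  | gen_mul : forall x y, generated G s x -> generated G s y ->
      generated G s (rog_mul G x y)
  | gen_inv : forall x, generated G s x -> generated G s (rog_inv G x).

Definition finitely_generated (G : RightOrderedGroup) : Prop :=
  exists s : list G, forall x : G, generated G s x.

Definition countable (G : RightOrderedGroup) : Prop :=
  exists f : G -> nat, forall x y, f x = f y -> x = y.

Definition order_embedding (G H : RightOrderedGroup) (f : G -> H) : Prop :=
  (forall x y, f x = f y -> x = y) /\
  (forall x y, f (rog_mul G x y) = rog_mul H (f x) (f y)) /\
  (forall x y, rog_le G x y -> rog_le H (f x) (f y)).

Definition order_embeds (G H : RightOrderedGroup) : Prop :=
  exists f : G -> H, order_embedding G H f.

(* For each real slope alpha, order Z^2 by the sign of a + b alpha (ties broken by b):
   this is a finitely generated totally ordered abelian group Z2_slope alpha.  An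
   order-embedding into a fixed group U is a homomorphism, so it is determined by the
   images of the two generators; and since an embedding also reflects the order, two
   different slopes cannot share these images, because some element of Z^2 is negative
   for one slope and positive for the other.  Thus alpha |-> (images of the generators)
   is injective from R into U * U, which is impossible when U is countable. *)

From Pilot Require Import Defs.
From Stdlib Require Import Reals Lra Lia ZArith List Cantor IndefiniteDescription Runcountable.

Section GroupFacts.
Variable G : RightOrderedGroup.
Local Notation "x * y" := (rog_mul G x y).
Local Notation "1" := (rog_one G).
Local Notation "x ^-1" := (rog_inv G x) (at level 3).

Lemma rog_mulVr (x : G) : x * x^-1 = 1.
Proof.
  transitivity ((x^-1^-1 * x^-1) * (x * x^-1)).
  { rewrite rog_mulV, rog_mul1; reflexivity. }
  rewrite <- rog_mulA, (rog_mulA G x^-1 x), rog_mulV, rog_mul1, rog_mulV.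
  reflexivity.
Qed.

Lemma rog_mul1r (x : G) : x * 1 = x.
Proof. rewrite <- (rog_mulV G x), rog_mulA, rog_mulVr, rog_mul1; reflexivity. Qed.

Lemma rog_mulIr (a b c : G) : a * c = b * c -> a = b.
Proof.
  intro E.
  rewrite <- (rog_mul1r a), <- (rog_mul1r b), <- (rog_mulVr c), !rog_mulA, E.
  reflexivity.
Qed.

Lemma generated_mul_gen (s : list G) x e :
  generated G s x -> In e s ->
  generated G s (x * e) /\ generated G s (x * e^-1).
Proof.
  intros Hx He; split; apply gen_mul; auto using gen_inv, gen_elem.
Qed.

End GroupFacts.

Section Homomorphisms.
Variables G U : RightOrderedGroup.
Variable f : G -> U.
Hypothesis f_mul : forall x y, f (rog_mul G x y) = rog_mul U (f x) (f y).

Lemma hom_one : f (rog_one G) = rog_one U.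
Proof.
  apply (rog_mulIr U _ _ (f (rog_one G))).
  rewrite <- f_mul, !rog_mul1; reflexivity.
Qed.

Lemma hom_inv x : f (rog_inv G x) = rog_inv U (f x).
Proof.
  apply (rog_mulIr U _ _ (f x)).
  rewrite <- f_mul, !rog_mulV; exact hom_one.
Qed.

End Homomorphisms.

Lemma hom_eq_generated (G U : RightOrderedGroup) (f h : G -> U) (s : list G) :
  (forall x y, f (rog_mul G x y) = rog_mul U (f x) (f y)) ->
  (forall x y, h (rog_mul G x y) = rog_mul U (h x) (h y)) ->
  (forall e, In e s -> f e = h e) ->
  forall x, generated G s x -> f x = h x.
Proof.
  intros f_mul h_mul Es x Hx; induction Hx as [x Hx| |x y _ IHx _ IHy|x _ IHx].
  - exact (Es x Hx).
  - rewrite (hom_one _ _ f f_mul), (hom_one _ _ h h_mul); reflexivity.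
  - rewrite f_mul, h_mul, IHx, IHy; reflexivity.
  - rewrite (hom_inv _ _ f f_mul), (hom_inv _ _ h h_mul), IHx; reflexivity.
Qed.

Lemma order_embedding_reflect (G U : RightOrderedGroup) (f : G -> U) :
  order_embedding G U f -> forall x y, rog_le U (f x) (f y) -> rog_le G x y.
Proof.
  intros [f_inj [_ f_le]] x y Hxy.
  destruct (rog_le_total G x y) as [Hle|Hge]; [exact Hle|].
  rewrite (f_inj _ _ (rog_le_antisym U _ _ Hxy (f_le _ _ Hge))).
  apply rog_le_refl.
Qed.

Open Scope Z_scope.

Definition zadd (p q : Z * Z) : Z * Z := (fst p + fst q, snd p + snd q).
Definition zopp (p : Z * Z) : Z * Z := (- fst p, - snd p).

Definition slope_key (al : R) (p : Z * Z) : R := (IZR (fst p) + IZR (snd p) * al)%R.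

(* The tie-break on the second coordinate makes the order antisymmetric even when
   al is rational and slope_key al is not injective. *)
Definition slope_le (al : R) (p q : Z * Z) : Prop :=
  (slope_key al p < slope_key al q)%R \/
  (slope_key al p = slope_key al q /\ snd p <= snd q).

Lemma slope_key_add al p q :
  slope_key al (zadd p q) = (slope_key al p + slope_key al q)%R.
Proof. destruct p, q; unfold slope_key, zadd; simpl; rewrite !plus_IZR; ring. Qed.

Lemma slope_le_antisym al p q : slope_le al p q -> slope_le al q p -> p = q.
Proof.
  destruct p as [a b], q as [c d]; unfold slope_le, slope_key; simpl.
  intros H1 H2.
  assert (b = d) by (destruct H1 as [|[]], H2 as [|[]]; try lra; lia); subst d.
  assert (IZR a = IZR c) by (destruct H1 as [|[]], H2 as [|[]]; lra).
  apply eq_IZR in H; subst; reflexivity.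
Qed.

Lemma slope_le_trans al p q r : slope_le al p q -> slope_le al q r -> slope_le al p r.
Proof.
  unfold slope_le; intros [|[]] [|[]]; [left; lra..|right; split; [lra|lia]].
Qed.

Lemma slope_le_total al p q : slope_le al p q \/ slope_le al q p.
Proof.
  unfold slope_le.
  destruct (Rtotal_order (slope_key al p) (slope_key al q)) as [|[E|]]; auto.
  destruct (Z.le_ge_cases (snd p) (snd q)); [left|right]; right; split; auto; lia.
Qed.

Lemma slope_le_add al p q r : slope_le al p q -> slope_le al (zadd p r) (zadd q r).
Proof.
  unfold slope_le; rewrite !slope_key_add; intros [|[]]; [left; lra|right; split].
  - lra.
  - destruct p, q, r; simpl in *; lia.
Qed.

Definition Z2_slope (al : R) : RightOrderedGroup.
Proof.
  refine {| rog_carrier := Z * Z; rog_mul := zadd; rog_one := (0, 0);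
            rog_inv := zopp; rog_le := slope_le al |}.
  - intros [] [] []; unfold zadd; simpl; f_equal; ring.
  - intros []; reflexivity.
  - intros []; unfold zadd, zopp; simpl; f_equal; ring.
  - intros; right; split; [reflexivity|lia].
  - apply slope_le_antisym.
  - apply slope_le_trans.
  - apply slope_le_total.
  - apply slope_le_add.
Defined.

Lemma Z2_slope_abelian al : abelian (Z2_slope al).
Proof. intros [] []; simpl; unfold zadd; simpl; f_equal; ring. Qed.

Lemma Z2_slope_totally_ordered al : totally_ordered (Z2_slope al).
Proof.
  intros x y z H; rewrite (Z2_slope_abelian al z x), (Z2_slope_abelian al z y).
  apply slope_le_add; exact H.
Qed.

Definition Z2_gens : list (Z * Z) := (1, 0) :: (0, 1) :: nil.

Lemma Z2_slope_generated al p : generated (Z2_slope al) Z2_gens p.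
Proof.
  assert (E1 : In (1, 0) Z2_gens) by (simpl; auto).
  assert (E2 : In (0, 1) Z2_gens) by (simpl; auto).
  destruct p as [a b].
  assert (Hb : generated (Z2_slope al) Z2_gens (0, b)).
  { induction b using Z.peano_ind; [apply gen_one|..];
      destruct (generated_mul_gen _ _ _ _ IHb E2) as [Hs Hp]; simpl in Hs, Hp;
      unfold zadd, zopp in Hs, Hp; simpl in Hs, Hp.
    - replace (Z.succ b) with (b + 1) by lia; exact Hs.
    - replace (Z.pred b) with (b + - (1)) by lia; exact Hp. }
  induction a using Z.peano_ind; [exact Hb|..];
    destruct (generated_mul_gen _ _ _ _ IHa E1) as [Hs Hp]; simpl in Hs, Hp;
    unfold zadd, zopp in Hs, Hp; simpl in Hs, Hp; rewrite Z.add_0_r in Hs, Hp.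
  - replace (Z.succ a) with (a + 1) by lia; exact Hs.
  - replace (Z.pred a) with (a + - (1)) by lia; exact Hp.
Qed.

Lemma Z2_slope_finitely_generated al : finitely_generated (Z2_slope al).
Proof. exists Z2_gens; apply Z2_slope_generated. Qed.

(* Witness (-p, q): choose q > 1 / (be - al), then p := up (q al) satisfies
   q al < p <= q al + 1 < q be. *)
Lemma slope_le_separate al be : (al < be)%R ->
  exists p : Z * Z, ~ slope_le al (0, 0) p /\ slope_le be (0, 0) p.
Proof.
  intro Hlt.
  destruct (archimed (/ (be - al))) as [Hq _].
  set (q := up (/ (be - al))) in *.
  assert (Hgap : (1 < IZR q * (be - al))%R).
  { replace 1%R with (/ (be - al) * (be - al))%R by (field; lra).
    apply Rmult_lt_compat_r; lra. }
  destruct (archimed (IZR q * al)) as [Hp1 Hp2].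
  exists (- up (IZR q * al), q); unfold slope_le, slope_key; simpl.
  rewrite opp_IZR; split.
  - intros [|[]]; lra.
  - left; nra.
Qed.

Lemma order_embedding_Z2_slope_eq (U : RightOrderedGroup) al be
  (f : Z2_slope al -> U) (h : Z2_slope be -> U) :
  order_embedding (Z2_slope al) U f -> order_embedding (Z2_slope be) U h ->
  f (1, 0) = h (1, 0) -> f (0, 1) = h (0, 1) -> al = be.
Proof.
  intros Hf Hh E1 E2.
  assert (Efh : forall p, f p = h p).
  { intro p; apply (hom_eq_generated _ _ f h Z2_gens (proj1 (proj2 Hf))).
    - exact (proj1 (proj2 Hh)).
    - intros e [<-|[<-|[]]]; assumption.
    - apply Z2_slope_generated. }
  destruct (Rtotal_order al be) as [Hlt|[Heq|Hgt]]; [exfalso| exact Heq |exfalso].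
  - destruct (slope_le_separate al be Hlt) as [p [Nal Hbe]].
    apply Nal, (order_embedding_reflect _ _ f Hf (0, 0) p).
    rewrite !Efh; exact (proj2 (proj2 Hh) (0, 0) p Hbe).
  - destruct (slope_le_separate be al Hgt) as [p [Nbe Hal]].
    apply Nbe, (order_embedding_reflect _ _ h Hh (0, 0) p).
    rewrite <- !Efh; exact (proj2 (proj2 Hf) (0, 0) p Hal).
Qed.

Lemma universal_abelian_countable_inject_R (U : RightOrderedGroup) :
  countable U ->
  (forall G : RightOrderedGroup,
     finitely_generated G -> totally_ordered G -> abelian G -> order_embeds G U) ->
  exists g : R -> nat, forall x y, g x = g y -> x = y.
Proof.
  intros [c c_inj] HU.
  assert (emb : forall al, {f : Z2_slope al -> U | order_embedding _ U f}).
  { intro al; apply constructive_indefinite_description, HU.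
    - apply Z2_slope_finitely_generated.
    - apply Z2_slope_totally_ordered.
    - apply Z2_slope_abelian. }
  exists (fun al => to_nat (c (proj1_sig (emb al) (1, 0)), c (proj1_sig (emb al) (0, 1)))).
  intros al be E; apply (f_equal of_nat) in E; rewrite !cancel_of_to in E.
  injection E as E1 E2; apply c_inj in E1, E2.
  destruct (emb al) as [f Hf], (emb be) as [h Hh]; simpl in *.
  exact (order_embedding_Z2_slope_eq U al be f h Hf Hh E1 E2).
Qed.

From mathcomp Require Import all_boot all_classical all_reals.
From mathcomp Require Import Rstruct Rstruct_topology.
Local Open Scope card_scope.

Lemma R_not_inject_nat (g : R -> nat) : ~ (forall x y, g x = g y -> x = y).
Proof.
move=> g_inj.
have R_le_nat : [set: R] #<= [set: nat].
  by apply/countable_injP; exists g => x y _ _; apply: g_inj.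
have nat_le_R : [set: nat] #<= [set: R].
  apply/pcard_leP; apply/injfunPex; exists INR => // x y _ _; apply: INR_eq.
case/ppcard_eqP: (Cantor_Bernstein nat_le_R R_le_nat) => f.
apply: (R_uncountable f); exists (f^-1)%FUN; split=> x.
- by rewrite (funK (in_setT x)).
- by rewrite (invK (in_setT x)).
Qed.

(* mathcomp-classical also defines [countable]; the statements below mean Defs.countable. *)
Import Defs.

Lemma no_countable_universal_abelian :
  ~ exists U : RightOrderedGroup, countable U /\
      forall G : RightOrderedGroup,
        finitely_generated G -> totally_ordered G -> abelian G -> order_embeds G U.
Proof.
  intros [U [cU univ]].
  destruct (universal_abelian_countable_inject_R U cU univ) as [g g_inj].
  exact (R_not_inject_nat g g_inj).
Qed.

Theorem mainTheorem2 :
  (~ exists U : RightOrderedGroup, countable U /\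
       forall G : RightOrderedGroup,
         finitely_generated G -> totally_ordered G -> abelian G ->
         order_embeds G U) /\
  (~ exists U : RightOrderedGroup, countable U /\
       forall G : RightOrderedGroup,
         finitely_generated G -> order_embeds G U).
Proof.
  split; [exact no_countable_universal_abelian|].
  intros [U [cU univ]]; apply no_countable_universal_abelian.
  exists U; split; [exact cU|].
  intros G G_fg _ _; exact (univ G G_fg).
Qed.
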